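(* Let $a\ge 3$ and $A=\begin{pmatrix}0&a&-2\\-a&0&a\\2&-a&0\end{pmatrix}$, with initial cluster $(x_1,x_2,x_3)$. For $k\ge1$ let $(3,1)_k$ denote the alternating mutation path of length $k$ whose first mutation is in direction $1$, i.e. $[1]$, $[3,1]$, $[1,3,1]$, $[3,1,3,1]$, and so on. Then for all $k\ge 1$, $\mathbf{d}(\operatorname{var}_A[(3,1)_k]) < \mathbf{d}(\operatorname{var}_A[(3,1)_{k+1}])$.
   Context: Matrix mutation: $\mu_k(B)=(b'_{ij})$ with $b'_{ij}=-b_{ij}$ if $i=k$ or $j=k$, $b'_{ij}=b_{ij}+\operatorname{sgn}(b_{ik})\max(b_{ik}b_{kj},0)$ otherwise. A seed $((x_1,x_2,x_3),B)$ mutates in direction $k$ to $(x',\mu_kB)$ with $x'_j=x_j$ ($j\ne k$), $x'_k=\big(\prod_{b_{ik}>0}x_i^{b_{ik}}+\prod_{b_{ik}<0}x_i^{-b_{ik}}\big)/x_k$. For a mutation path (mutations applied right to left), $\operatorname{var}_A[\cdot]$ is the cluster variable newly created by the last mutation, starting from the seed $((x_1,x_2,x_3),A)$. The denominator vector $\mathbf{d}(z)=(d_1,d_2,d_3)$ of a cluster variable $z$ is defined by writing $z=N(x_1,x_2,x_3)/(x_1^{d_1}x_2^{d_2}x_3^{d_3})$ with $N$ a polynomial not divisible by any $x_i$ (so $\mathbf{d}(x_i)=-e_i$). The order on denominator vectors is componentwise: $u<v$ means $u_i\le v_i$ for all $i$ and $u\ne v$. *)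

From HB Require Import structures.
From mathcomp Require Import all_boot all_order all_algebra.
From mathcomp Require Import fraction.
From mathcomp Require Import mpoly.
Set Implicit Arguments. Unset Strict Implicit. Unset Printing Implicit Defensive.
Import Order.TTheory GRing.Theory Num.Theory.
Local Open Scope ring_scope.

(* Ambient field: the field of rational functions Q(x1,x2,x3), realised as the
   fraction field of Z[x1,x2,x3].  Index i : 'I_3 stands for x_(i+1). *)
Definition Poly3 := {mpoly int[3]}.
Definition Frac3 := {fraction Poly3}.

Definition xvar (i : 'I_3) : Frac3 := tofrac ('X_i : Poly3).

Definition exmat := 'M[int]_3.

Definition mutate_mat (k : 'I_3) (B : exmat) : exmat :=
  \matrix_(i < 3, j < 3)
    if (i == k) || (j == k) then - B i j
    else B i j + sgz (B i k) * Num.max (B i k * B k j) 0.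

Definition seed := (('I_3 -> Frac3) * exmat)%type.

Definition mutate_seed (k : 'I_3) (s : seed) : seed :=
  let: (x, B) := s in
  let xk' := ((\prod_(i < 3 | 0 < B i k) x i ^+ `|B i k|%N)
              + (\prod_(i < 3 | B i k < 0) x i ^+ `|B i k|%N)) / x k in
  ((fun j => if j == k then xk' else x j), mutate_mat k B).

Definition init_seed (A : exmat) : seed := (xvar, A).

(* A mutation path is written as in the paper, [k_m; ...; k_2; k_1],
   the mutations being applied right to left (k_1 first). *)
Definition run_path (A : exmat) (p : seq 'I_3) : seed :=
  foldr mutate_seed (init_seed A) p.

(* var_A[p]: the cluster variable newly created by the last mutation of p
   (the head of the list); arbitrary (0) for the empty path. *)
Definition var_path (A : exmat) (p : seq 'I_3) : Frac3 :=
  match p with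
  | [::] => 0
  | k :: _ => (run_path A p).1 k
  end.

Definition is_denom_vector (z : Frac3) (d : 'I_3 -> int) : Prop :=
  exists N : Poly3,
    (forall i : 'I_3, ~ exists M : Poly3, N = 'X_i * M) /\
    z = tofrac N / \prod_(i < 3) xvar i ^ d i.

Definition dvec_lt (u v : 'I_3 -> int) : Prop :=
  (forall i, u i <= v i) /\ u <> v.

(* directions 1 and 3 (0-based indices 0 and 2) *)
Definition dir1 : 'I_3 := @Ordinal 3 0 isT.
Definition dir3 : 'I_3 := @Ordinal 3 2 isT.

(* (3,1)_k : [1], [3,1], [1,3,1], [3,1,3,1], ... (written order) *)
Fixpoint alt31 (k : nat) : seq 'I_3 :=
  match k with
  | 0 => [::]
  | k'.+1 => (if odd k' then dir3 else dir1) :: alt31 k'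
  end.

Definition Amat (a : int) : exmat :=
  \matrix_(i < 3, j < 3)
    match nat_of_ord i, nat_of_ord j with
    | 0, 1 => a   | 0, 2 => -2
    | 1, 0 => - a | 1, 2 => a
    | 2, 0 => 2   | 2, 1 => - a
    | _, _ => 0
    end.

From HB Require Import structures.
From mathcomp Require Import all_boot all_order all_algebra.
From mathcomp Require Import fraction.
From mathcomp Require Import mpoly.
From mathcomp Require Import ring zify.
(* Mutating alternately in directions 1 and 3 sends A to -A and back, and
   each mutation replaces x1 or x3 by (u_(n+1)^2 + x2^a) / u_n; hence
   var_A[(3,1)_k] = u_(k+1) for the sequence u_0 = x1, u_1 = x3,
   u_(n+2) u_n = u_(n+1)^2 + x2^a.
   The quantity (u_n^2 + u_(n+1)^2 + x2^a) / (u_n u_(n+1)) does not depend on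
   n, which makes the recurrence linear.  Clearing denominators gives
   u_(n+1) = P_n / (x1^n x3^(n-1)) with P_n in Z[x1,x2,x3], again given by a
   linear recurrence.  Setting one variable to 0 and the others to 1 turns P_n
   into a positive integer, so no x_i divides P_n and d(u_(n+1)) = (n, 0, n-1),
   which increases strictly with n. *)

Set Implicit Arguments.
Unset Strict Implicit.
Unset Printing Implicit Defensive.

Import Order.TTheory GRing.Theory Num.Theory.
Local Open Scope ring_scope.

Section LinearRecurrence.
Variable R : pzRingType.
Variables m e p1 : R.

Fixpoint linrec (n : nat) : R :=
  match n with
  | 0 => 1
  | n'.+1 => if n' is n''.+1 then m * linrec n' - e * linrec n'' else p1
  end.

Lemma linrecSS n : linrec n.+2 = m * linrec n.+1 - e * linrec n.
Proof. by []. Qed.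

Lemma linrec_ind (P : R -> Prop) :
  P 1 -> P p1 -> (forall r s, P r -> P s -> P (m * s - e * r)) ->
  forall n, P (linrec n).
Proof.
move=> P0 P1 PS n; suff: P (linrec n) /\ P (linrec n.+1) by case.
by elim: n => [|n [IHn IHn1]]; split=> //; apply: PS.
Qed.

End LinearRecurrence.

Lemma rmorph_linrec (R S : pzRingType) (f : {rmorphism R -> S}) m e p1 n :
  f (linrec m e p1 n) = linrec (f m) (f e) (f p1) n.
Proof.
suff: f (linrec m e p1 n) = linrec (f m) (f e) (f p1) n /\
      f (linrec m e p1 n.+1) = linrec (f m) (f e) (f p1) n.+1 by case.
elim: n => [|n [IHn IHn1]]; first by rewrite rmorph1.
by split=> //; rewrite !linrecSS rmorphB !rmorphM IHn IHn1.
Qed.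

Lemma linrec_gt0 (R : numDomainType) (m p1 : R) n :
  0 < m -> 0 < p1 -> 0 < linrec m 0 p1 n.
Proof.
move=> m_gt0 p1_gt0; apply: (linrec_ind (P := fun r => 0 < r)) => // r s _ s_gt0.
by rewrite mul0r subr0 mulr_gt0.
Qed.

Lemma linrec_eq1 (R : pzRingType) (m e : R) n : m - e = 1 -> linrec m e 1 n = 1.
Proof.
by move=> me1; apply: (linrec_ind (P := fun r => r = 1)) => // r s -> ->; rewrite !mulr1.
Qed.

Section ExchangeSequence.
Variable F : fieldType.
Variables x y c : F.
Hypotheses (x_neq0 : x != 0) (y_neq0 : y != 0).

Definition exch_const : F := (x ^+ 2 + y ^+ 2 + c) / (x * y).

Fixpoint exch_seq (n : nat) : F :=
  match n with
  | 0 => x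
  | n'.+1 => if n' is n''.+1 then exch_const * exch_seq n' - exch_seq n'' else y
  end.

Lemma exch_seqSS n : exch_seq n.+2 = exch_const * exch_seq n.+1 - exch_seq n.
Proof. by []. Qed.

Lemma exch_seq_invariant n :
  exch_seq n ^+ 2 + exch_seq n.+1 ^+ 2 + c = exch_const * exch_seq n * exch_seq n.+1.
Proof.
elim: n => [|n IHn].
  by rewrite /= /exch_const; field; rewrite x_neq0 y_neq0.
rewrite exch_seqSS.
have -> : c = exch_const * exch_seq n * exch_seq n.+1 - exch_seq n ^+ 2 - exch_seq n.+1 ^+ 2.
  by rewrite -IHn; ring.
ring.
Qed.

Lemma exch_seq_exchange n : exch_seq n.+2 * exch_seq n = exch_seq n.+1 ^+ 2 + c.
Proof. by rewrite exch_seqSS mulrBl mulrAC -exch_seq_invariant; ring. Qed.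

Definition exch_numer (n : nat) : F :=
  linrec (x ^+ 2 + y ^+ 2 + c) (x ^+ 2 * y ^+ 2) (y ^+ 2 + c) n.

Lemma exch_seq_numer n : exch_seq n.+1 * (x * y) ^+ n = y * exch_numer n.
Proof.
suff: exch_seq n.+1 * (x * y) ^+ n = y * exch_numer n /\
      exch_seq n.+2 * (x * y) ^+ n.+1 = y * exch_numer n.+1 by case.
elim: n => [|n [IHn IHn1]].
  by rewrite /= /exch_const !mulr1; split=> //; field; rewrite x_neq0 y_neq0.
have numerSS : exch_numer n.+2 =
    (x ^+ 2 + y ^+ 2 + c) * exch_numer n.+1 - x ^+ 2 * y ^+ 2 * exch_numer n by [].
split=> //; rewrite exch_seqSS numerSS [RHS]mulrBr [in RHS]mulrCA.
rewrite [y * (_ * exch_numer n)]mulrCA -IHn -IHn1 !exprS /exch_const.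
by field; rewrite x_neq0 y_neq0.
Qed.

Lemma exch_seq_denom n : exch_seq n.+2 = exch_numer n.+1 / (x ^+ n.+1 * y ^+ n).
Proof.
have xn_neq0 : x ^+ n.+1 != 0 by rewrite expf_neq0.
have yn_neq0 : y ^+ n != 0 by rewrite expf_neq0.
apply: (canRL (mulfK (mulf_neq0 xn_neq0 yn_neq0))).
apply: (mulfI y_neq0); rewrite -exch_seq_numer exprMn [y ^+ n.+1]exprS.
ring.
Qed.

Lemma exch_seq_mutation n :
  exch_seq n != 0 -> (exch_seq n.+1 ^+ 2 + c) / exch_seq n = exch_seq n.+2.
Proof. by move=> un_neq0; rewrite -exch_seq_exchange mulfK. Qed.

End ExchangeSequence.

Arguments exch_seq : simpl never.

Lemma meval_neq0_not_Xmultiple (R : comRingType) n (v : 'I_n -> R) (i : 'I_n)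
    (p : {mpoly R[n]}) :
  v i = 0 -> meval v p != 0 -> ~ exists q, p = 'X_i * q.
Proof. by move=> vi0 /eqP + [q pq]; apply; rewrite pq mevalM mevalXU vi0 mul0r. Qed.

Definition dir2 : 'I_3 := @Ordinal 3 1 isT.

Local Notation x1 := (xvar dir1).
Local Notation x2 := (xvar dir2).
Local Notation x3 := (xvar dir3).

Lemma xvar_neq0 i : xvar i != 0.
Proof.
rewrite tofrac_eq0; apply/eqP => /(congr1 (meval (fun _ => 1 : int))).
by rewrite mevalXU meval0.
Qed.

Definition numer_poly (a : int) (n : nat) : Poly3 :=
  linrec ('X_dir1 ^+ 2 + 'X_dir3 ^+ 2 + 'X_dir2 ^+ `|a|%N)
         ('X_dir1 ^+ 2 * 'X_dir3 ^+ 2) ('X_dir3 ^+ 2 + 'X_dir2 ^+ `|a|%N) n.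

Lemma tofrac_numer_poly a n :
  tofrac (numer_poly a n) = exch_numer x1 x3 (x2 ^+ `|a|%N) n.
Proof. by rewrite rmorph_linrec !rmorphD !rmorphM !rmorphXn. Qed.

Lemma meval_numer_poly a (v : 'I_3 -> int) n :
  meval v (numer_poly a n) =
  linrec (v dir1 ^+ 2 + v dir3 ^+ 2 + v dir2 ^+ `|a|%N)
         (v dir1 ^+ 2 * v dir3 ^+ 2) (v dir3 ^+ 2 + v dir2 ^+ `|a|%N) n.
Proof. by rewrite (rmorph_linrec (meval v)) /= !mevalD !mevalM !rmorphXn /= !mevalXU. Qed.

Lemma numer_poly_not_Xmultiple a n i : 0 < a -> ~ exists q, numer_poly a n = 'X_i * q.
Proof.
move=> a_gt0; pose v j : int := if j == i then 0 else 1.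
apply: (@meval_neq0_not_Xmultiple _ _ v); first by rewrite /v eqxx.
have a_neq0 : (`|a| == 0)%N = false by apply/negbTE; lia.
rewrite meval_numer_poly /v; case: i {v} => [[|[|[|//]]] ?] /=;
  rewrite ?expr0n ?a_neq0 ?expr1n /= ?mul0r ?mulr0.
- by rewrite gt_eqF ?linrec_gt0.
- by rewrite linrec_eq1 ?addr0.
- by rewrite gt_eqF ?linrec_gt0.
Qed.

Lemma numer_poly_neq0 a n : 0 < a -> numer_poly a n != 0.
Proof.
move=> a_gt0; apply/eqP => P0.
by apply: (numer_poly_not_Xmultiple (n := n) (i := dir1) a_gt0); exists 0; rewrite P0 mulr0.
Qed.

Local Notation u a := (exch_seq x1 x3 (x2 ^+ `|a|%N)).

Lemma u_neq0 a n : 0 < a -> u a n != 0.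
Proof.
move=> a_gt0; case: n => [|n]; first exact: xvar_neq0.
have := exch_seq_numer (x2 ^+ `|a|) (xvar_neq0 dir1) (xvar_neq0 dir3) n.
rewrite -tofrac_numer_poly; apply: contra_eq_neq => ->.
by rewrite mul0r eq_sym mulf_neq0 ?xvar_neq0 ?tofrac_eq0 ?numer_poly_neq0.
Qed.

Lemma mutate_mat_Amat_dir1 a : 0 < a -> mutate_mat dir1 (Amat a) = - Amat a.
Proof.
move=> a_gt0; apply/matrixP => i j; rewrite !mxE.
case: i => [[|[|[|//]]] ?]; case: j => [[|[|[|//]]] ?]; rewrite /= ?mxE /=;
  rewrite ?mulr0 ?mul0r ?addr0 ?oppr0 ?sgzN ?gtr0_sgz //; nia.
Qed.

Lemma mutate_mat_oppAmat_dir3 a : 0 < a -> mutate_mat dir3 (- Amat a) = Amat a.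
Proof.
move=> a_gt0; apply/matrixP => i j; rewrite !mxE.
case: i => [[|[|[|//]]] ?]; case: j => [[|[|[|//]]] ?]; rewrite /= ?mxE /=;
  rewrite ?mulr0 ?mul0r ?addr0 ?oppr0 ?opprK ?sgzN ?gtr0_sgz //; nia.
Qed.

Lemma prod_ord3 (R : comRingType) (F : 'I_3 -> R) :
  \prod_(i < 3) F i = F dir1 * F dir2 * F dir3.
Proof.
by rewrite !big_ord_recr big_ord0 /= mul1r; congr (F _ * F _ * F _); apply: val_inj.
Qed.

Lemma exchange_binomial_Amat_dir1 (R : comRingType) a (x : 'I_3 -> R) : 0 < a ->
  \prod_(i < 3 | 0 < Amat a i dir1) x i ^+ `|Amat a i dir1|%N
  + \prod_(i < 3 | Amat a i dir1 < 0) x i ^+ `|Amat a i dir1|%N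
  = x dir3 ^+ 2 + x dir2 ^+ `|a|%N.
Proof.
move=> a_gt0; rewrite big_mkcond [X in _ + X]big_mkcond !prod_ord3 !mxE /=.
by rewrite oppr_gt0 oppr_lt0 a_gt0 ltNge (ltW a_gt0) abszN /= !mul1r mulr1 addrC.
Qed.

Lemma exchange_binomial_oppAmat_dir3 (R : comRingType) a (x : 'I_3 -> R) : 0 < a ->
  \prod_(i < 3 | 0 < (- Amat a) i dir3) x i ^+ `|(- Amat a) i dir3|%N
  + \prod_(i < 3 | (- Amat a) i dir3 < 0) x i ^+ `|(- Amat a) i dir3|%N
  = x dir1 ^+ 2 + x dir2 ^+ `|a|%N.
Proof.
move=> a_gt0; rewrite big_mkcond [X in _ + X]big_mkcond !prod_ord3 !mxE /=.
by rewrite oppr_gt0 oppr_lt0 a_gt0 ltNge (ltW a_gt0) abszN /= mul1r !mulr1.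
Qed.

Lemma run_alt31 a k : 0 < a ->
  let s := run_path (Amat a) (alt31 k) in
  [/\ s.2 = (if odd k then - Amat a else Amat a),
      s.1 dir1 = u a (if odd k then k.+1 else k),
      s.1 dir3 = u a (if odd k then k else k.+1) &
      s.1 dir2 = x2].
Proof.
move=> a_gt0; elim: k => [|k IHk] //=.
case: (run_path (Amat a) (alt31 k)) IHk => x B /= [-> x1E x3E x2E].
case: (odd k) x1E x3E => x1E x3E /=.
- rewrite exchange_binomial_oppAmat_dir3 // mutate_mat_oppAmat_dir3 //.
  by rewrite x1E x2E x3E exch_seq_mutation ?xvar_neq0 ?u_neq0 //; split.
- rewrite exchange_binomial_Amat_dir1 // mutate_mat_Amat_dir1 //.
  by rewrite x1E x2E x3E exch_seq_mutation ?xvar_neq0 ?u_neq0 //; split.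
Qed.

Lemma var_alt31 a k : 0 < a -> var_path (Amat a) (alt31 k.+1) = u a k.+2.
Proof.
move=> a_gt0; have [_ x1E x3E _] := run_alt31 k.+1 a_gt0.
have -> : var_path (Amat a) (alt31 k.+1) =
    (run_path (Amat a) (alt31 k.+1)).1 (if odd k then dir3 else dir1) by [].
by move: x1E x3E; rewrite oddS; case: (odd k) => x1E x3E.
Qed.

Definition alt31_dvec (k : nat) (i : 'I_3) : int :=
  if i == dir1 then k.+1 else if i == dir3 then k else 0.

Lemma denom_vector_u a k : 0 < a -> is_denom_vector (u a k.+2) (alt31_dvec k).
Proof.
move=> a_gt0; exists (numer_poly a k.+1); split.
  by move=> i; apply: numer_poly_not_Xmultiple.
rewrite tofrac_numer_poly prod_ord3 /alt31_dvec /= expr0z mulr1.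
exact: exch_seq_denom (xvar_neq0 dir1) (xvar_neq0 dir3) k.
Qed.

Lemma alt31_dvec_lt k : dvec_lt (alt31_dvec k) (alt31_dvec k.+1).
Proof.
split=> [i | /(congr1 (fun d => d dir1)) /eqP]; rewrite /alt31_dvec /=; last by lia.
by case: ifP => _; last case: ifP => _; lia.
Qed.

Theorem mainTheorem17 (a : int) (ha : 3 <= a) (k : nat) (hk : (1 <= k)%N) :
  exists d1 d2 : 'I_3 -> int,
    is_denom_vector (var_path (Amat a) (alt31 k)) d1 /\
    is_denom_vector (var_path (Amat a) (alt31 k.+1)) d2 /\
    dvec_lt d1 d2.
Proof.
have a_gt0 : 0 < a by lia.
case: k hk => [//|k] _.
exists (alt31_dvec k), (alt31_dvec k.+1); rewrite !var_alt31 //.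
split; first exact: denom_vector_u.
split; first exact: denom_vector_u.
exact: alt31_dvec_lt.
Qed.
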